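(* For $n\in\{0,1,2\}$ and a monoid $S$ the following are equivalent: (i) $S$ is $n$-supernilpotent; (ii) $S$ is left and right $n$-nilpotent; (iii) $S$ embeds into an $n$-nilpotent group.
   Context: Monoids are regarded as semigroups $(S,\cdot)$. For congruences $\alpha_1,\dots,\alpha_k$, $M(\alpha_1,\dots,\alpha_k)$ is the subsemigroup of $S^{\{0,1\}^k}$ generated by all $g$ such that for some $i$ and $(a,b)\in\alpha_i$, $g(x)=a$ if $x_i=0$ and $g(x)=b$ if $x_i=1$; $[\alpha_1,\dots,\alpha_k]$ is the smallest congruence $\delta$ such that for all $f\in M(\alpha_1,\dots,\alpha_k)$: if $(f(x0),f(x1))\in\delta$ for all $x\in\{0,1\}^{k-1}\setminus\{(1,\dots,1)\}$ then $(f(1,\dots,1,0),f(1,\dots,1,1))\in\delta$. With $1$ total, $0$ trivial congruence: $(1]^1=1$, $(1]^{j+1}=[1,(1]^j]$; $[1)^1=1$, $[1)^{j+1}=[[1)^j,1]$. Left $n$-nilpotent: $(1]^{n+1}=0$; right $n$-nilpotent: $[1)^{n+1}=0$; $n$-supernilpotent: the $(n+1)$-ary $[1,\dots,1]=0$. An $n$-nilpotent group has nilpotency class at most $n$. *)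

From mathcomp Require Import all_boot.

Set Implicit Arguments.
Unset Strict Implicit.
Unset Printing Implicit Defensive.

(* Monoids are regarded as semigroups (S, mul).  Relations are S -> S -> Prop. *)

Definition is_congr (S : Type) (mul : S -> S -> S) (r : S -> S -> Prop) : Prop :=
  [/\ (forall a, r a a),
      (forall a b, r a b -> r b a),
      (forall a b c, r a b -> r b c -> r a c) &
      (forall a b c d, r a b -> r c d -> r (mul a c) (mul b d))].

Definition total_rel (S : Type) : S -> S -> Prop := fun _ _ => True.

Definition is_trivial (S : Type) (r : S -> S -> Prop) : Prop :=
  forall a b, r a b -> a = b.

(* M(alpha_1, ..., alpha_k) for k = m.+1, as a predicate on maps
   {0,1}^k -> S, points of {0,1}^k being maps 'I_k -> bool. *)
Inductive Mgen (S : Type) (mul : S -> S -> S) (m : nat)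
    (alpha : 'I_m.+1 -> S -> S -> Prop) : (('I_m.+1 -> bool) -> S) -> Prop :=
  | Mgen_gen (i : 'I_m.+1) (a b : S) :
      alpha i a b -> Mgen mul alpha (fun x => if x i then b else a)
  | Mgen_mul (f g : ('I_m.+1 -> bool) -> S) :
      Mgen mul alpha f -> Mgen mul alpha g -> Mgen mul alpha (fun x => mul (f x) (g x)).

(* x b : the point of {0,1}^(m+1) obtained by appending b to x in {0,1}^m. *)
Definition ext_pt (m : nat) (x : 'I_m -> bool) (b : bool) : 'I_m.+1 -> bool :=
  fun i => if unlift ord_max i is Some j then x j else b.

Definition term_cond (S : Type) (mul : S -> S -> S) (m : nat)
    (alpha : 'I_m.+1 -> S -> S -> Prop) (delta : S -> S -> Prop) : Prop :=
  forall f, Mgen mul alpha f ->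
    (forall x : 'I_m -> bool, ~ (forall j, x j = true) ->
       delta (f (ext_pt x false)) (f (ext_pt x true))) ->
    delta (f (ext_pt (fun _ => true) false)) (f (ext_pt (fun _ => true) true)).

Definition commutator (S : Type) (mul : S -> S -> S) (m : nat)
    (alpha : 'I_m.+1 -> S -> S -> Prop) : S -> S -> Prop :=
  fun a b => forall delta, is_congr mul delta -> term_cond mul alpha delta -> delta a b.

Definition comm2 (S : Type) (mul : S -> S -> S) (a b : S -> S -> Prop) : S -> S -> Prop :=
  commutator mul (fun i : 'I_2 => if val i == 0 then a else b).

(* lpow j = (1]^(j+1),  rpow j = [1)^(j+1). *)
Fixpoint lpow (S : Type) (mul : S -> S -> S) (j : nat) : S -> S -> Prop :=
  match j with
  | 0 => @total_rel S
  | j'.+1 => comm2 mul (@total_rel S) (lpow mul j')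
  end.

Fixpoint rpow (S : Type) (mul : S -> S -> S) (j : nat) : S -> S -> Prop :=
  match j with
  | 0 => @total_rel S
  | j'.+1 => comm2 mul (rpow mul j') (@total_rel S)
  end.

Definition left_nilpotent (S : Type) (mul : S -> S -> S) (n : nat) : Prop :=
  is_trivial (lpow mul n).

Definition right_nilpotent (S : Type) (mul : S -> S -> S) (n : nat) : Prop :=
  is_trivial (rpow mul n).

Definition supernilpotent (S : Type) (mul : S -> S -> S) (n : nat) : Prop :=
  is_trivial (commutator mul (fun _ : 'I_n.+1 => @total_rel S)).

Definition is_group (G : Type) (gmul : G -> G -> G) (ginv : G -> G) (ge : G) : Prop :=
  [/\ associative gmul, left_id ge gmul, right_id ge gmul,
      (forall x, gmul (ginv x) x = ge) & (forall x, gmul x (ginv x) = ge)].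

Inductive subgrp_gen (G : Type) (gmul : G -> G -> G) (ginv : G -> G) (ge : G)
    (A : G -> Prop) : G -> Prop :=
  | sg_base x : A x -> subgrp_gen gmul ginv ge A x
  | sg_one : subgrp_gen gmul ginv ge A ge
  | sg_mul x y : subgrp_gen gmul ginv ge A x -> subgrp_gen gmul ginv ge A y ->
      subgrp_gen gmul ginv ge A (gmul x y)
  | sg_inv x : subgrp_gen gmul ginv ge A x -> subgrp_gen gmul ginv ge A (ginv x).

Definition gcomm (G : Type) (gmul : G -> G -> G) (ginv : G -> G) (x y : G) : G :=
  gmul (gmul (ginv x) (ginv y)) (gmul x y).

(* lcs i = gamma_(i+1): gamma_1 = G, gamma_(i+1) = [gamma_i, G]. *)
Fixpoint lcs (G : Type) (gmul : G -> G -> G) (ginv : G -> G) (ge : G) (i : nat)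
    : G -> Prop :=
  match i with
  | 0 => fun _ => True
  | i'.+1 => subgrp_gen gmul ginv ge
               (fun z => exists x y, lcs gmul ginv ge i' x /\ z = gcomm gmul ginv x y)
  end.

Definition nilpotent_group (G : Type) (gmul : G -> G -> G) (ginv : G -> G) (ge : G)
    (n : nat) : Prop :=
  forall x, lcs gmul ginv ge n x -> x = ge.

Definition embeds_into_nilpotent_group (S : Type) (mul : S -> S -> S) (n : nat) : Prop :=
  exists (G : Type) (gmul : G -> G -> G) (ginv : G -> G) (ge : G),
    [/\ is_group gmul ginv ge, nilpotent_group gmul ginv ge n &
        exists h : S -> G, injective h /\ forall a b, h (mul a b) = gmul (h a) (h b)].

(* For n = 0 every condition says that S is trivial.  For n = 1, 2, condition (i) is one
   and condition (ii) a pair of term conditions for the equality relation.  Applied to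
   suitable terms, they make S cancellative and, for n = 1, commutative, and for n = 2 they
   force the law a b w a a b a = b a w a a a b.  With w = 1 this law is a right Ore condition,
   so S embeds into its group of right fractions a b^-1; for general w it says that the
   commutator of two elements of S commutes with S, so that the group of fractions has class
   at most n.  Conversely, let S sit in a group of class at most 2.  Along the last coordinate
   every f in M(alpha_1, ..., alpha_k) moves by a factor v(x) d with v(x) central and v modular
   in the remaining coordinates x; modularity gives the ternary term condition, and working
   modulo the centre gives [1,1] <= zeta(G) and hence the term conditions for [1,[1,1]] and
   [[1,1],1]. *)

From mathcomp Require Import all_boot.
From Stdlib Require Import FunctionalExtensionality PropExtensionality.
From Stdlib Require Import ProofIrrelevance IndefiniteDescription.

Set Implicit Arguments.
Unset Strict Implicit.
Unset Printing Implicit Defensive.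

Section Commutator.
Variables (S : Type) (mul : S -> S -> S).

Lemma commutator_congr m (alpha : 'I_m.+1 -> S -> S -> Prop) :
  is_congr mul (commutator mul alpha).
Proof.
split.
- by move=> a d [Hrefl _ _ _] _; apply: Hrefl.
- by move=> a b Hab d Hd Ht; case: (Hd) => _ Hsym _ _; apply: Hsym; apply: Hab.
- move=> a b c Hab Hbc d Hd Ht; case: (Hd) => _ _ Htrans _.
  exact: Htrans (Hab d Hd Ht) (Hbc d Hd Ht).
- move=> a b c d Hab Hcd r Hr Ht; case: (Hr) => _ _ _ Hmul.
  exact: Hmul (Hab r Hr Ht) (Hcd r Hr Ht).
Qed.

Lemma commutator_term_cond m (alpha : 'I_m.+1 -> S -> S -> Prop) :
  term_cond mul alpha (commutator mul alpha).
Proof. by move=> f Hf H d Hd Ht; apply: (Ht f Hf) => x Hx; apply: H. Qed.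

Lemma eq_congr : is_congr mul (@eq S).
Proof. by split=> // [? ? ? -> | ? ? ? ? -> ->]. Qed.

Lemma commutator_trivialP m (alpha : 'I_m.+1 -> S -> S -> Prop) :
  is_trivial (commutator mul alpha) <-> term_cond mul alpha (@eq S).
Proof.
split=> [triv f Hf H | Ht a b Hab]; last exact: Hab _ eq_congr Ht.
apply: triv; apply: commutator_term_cond => // x Hx.
rewrite (H x Hx); case: (commutator_congr alpha) => Hrefl _ _ _; exact: Hrefl.
Qed.

End Commutator.

(** * Term conditions at explicit points *)

Lemma ext_pt_max m (x : 'I_m -> bool) b : ext_pt x b ord_max = b.
Proof. by rewrite /ext_pt unlift_none. Qed.

Lemma ext_pt_lift m (x : 'I_m -> bool) b j : ext_pt x b (lift ord_max j) = x j.
Proof. by rewrite /ext_pt liftK. Qed.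

Definition pt2 (b0 b1 : bool) : 'I_2 -> bool := ext_pt (fun _ => b0) b1.

Definition pt3 (b0 b1 b2 : bool) : 'I_3 -> bool :=
  ext_pt (fun j : 'I_2 => if val j == 0 then b0 else b1) b2.

Definition ord1_3 : 'I_3 := Ordinal (isT : 1 < 3).

Lemma pt2_0 b0 b1 : pt2 b0 b1 ord0 = b0.
Proof. by rewrite /pt2 (_ : ord0 = lift ord_max ord0) ?ext_pt_lift //; apply: val_inj. Qed.

Lemma pt2_1 b0 b1 : pt2 b0 b1 ord_max = b1.
Proof. exact: ext_pt_max. Qed.

Lemma pt3_0 b0 b1 b2 : pt3 b0 b1 b2 ord0 = b0.
Proof. by rewrite /pt3 (_ : ord0 = lift ord_max ord0) ?ext_pt_lift //; apply: val_inj. Qed.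

Lemma pt3_1 b0 b1 b2 : pt3 b0 b1 b2 ord1_3 = b1.
Proof. by rewrite /pt3 (_ : ord1_3 = lift ord_max ord_max) ?ext_pt_lift //; apply: val_inj. Qed.

Lemma pt3_2 b0 b1 b2 : pt3 b0 b1 b2 ord_max = b2.
Proof. exact: ext_pt_max. Qed.

Lemma ext_pt_eq_off m (x y : 'I_m -> bool) b (j : 'I_m) :
  (forall k, k != j -> x k = y k) ->
  forall k, k != lift ord_max j -> ext_pt x b k = ext_pt y b k.
Proof.
move=> Exy k; case: (unliftP ord_max k) => [k' -> | ->]; last by rewrite !ext_pt_max.
by rewrite (inj_eq lift_inj) !ext_pt_lift; apply: Exy.
Qed.

Section TermCondPoints.
Variables (S : Type) (mul : S -> S -> S).

Lemma term_cond2_apply (alpha : 'I_2 -> S -> S -> Prop) delta f :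
  term_cond mul alpha delta -> Mgen mul alpha f ->
  delta (f (pt2 false false)) (f (pt2 false true)) ->
  delta (f (pt2 true false)) (f (pt2 true true)).
Proof.
move=> Ht Hf H; apply: Ht => // x Hx.
have -> : x = fun _ => false.
  apply: functional_extensionality => j; rewrite (ord1 j).
  by case E: (x ord0) => //; case: Hx => k; rewrite (ord1 k).
exact: H.
Qed.

Lemma term_cond3_apply (alpha : 'I_3 -> S -> S -> Prop) delta f :
  term_cond mul alpha delta -> Mgen mul alpha f ->
  delta (f (pt3 false false false)) (f (pt3 false false true)) ->
  delta (f (pt3 true false false)) (f (pt3 true false true)) ->
  delta (f (pt3 false true false)) (f (pt3 false true true)) ->
  delta (f (pt3 true true false)) (f (pt3 true true true)).
Proof.
move=> Ht Hf H00 H10 H01.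
have pt3T b : pt3 true true b = ext_pt (fun _ => true) b.
  by congr ext_pt; apply: functional_extensionality => j; rewrite if_same.
rewrite !pt3T; apply: Ht => // x Hx.
have -> : x = fun j : 'I_2 => if val j == 0 then x ord0 else x ord_max.
  by apply: functional_extensionality => -[[|[|//]] ?]; congr x; apply: val_inj.
case E0: (x ord0); case E1: (x ord_max) => //.
case: Hx => -[[|[|//]] ?]; [rewrite -E0 | rewrite -E1]; congr x; exact: val_inj.
Qed.

End TermCondPoints.

(** * Laws forced by term conditions *)

Section MonoidLaws.
Variables (S : Type) (mul : S -> S -> S) (e : S).
Hypotheses (mulA : associative mul) (mul1s : left_id e mul) (muls1 : right_id e mul).
Local Infix "**" := mul (at level 40, left associativity).
Local Notation total := (@total_rel S).

(* Malcev's law x y w y x = y x w x y of class-2 nilpotent groups, with w replaced by w a a. *)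
Definition twisted_malcev_law :=
  forall a b w, a ** b ** w ** a ** a ** b ** a = b ** a ** w ** a ** a ** a ** b.

Definition comm11 := commutator mul (fun _ : 'I_2 => total).

Lemma comm2_total : comm2 mul total total = comm11.
Proof.
by rewrite /comm2 /comm11; congr commutator; apply: functional_extensionality => i; rewrite if_same.
Qed.

Ltac Mgen_auto := repeat (first [apply: Mgen_mul | apply: Mgen_gen]); try done.
Ltac pt_simpl := rewrite /= ?pt2_0 ?pt2_1 ?pt3_0 ?pt3_1 ?pt3_2 /= ?mul1s ?muls1 ?mulA.

Section Binary.
Variables (alpha : 'I_2 -> S -> S -> Prop) (delta : S -> S -> Prop).
Hypotheses (tc : term_cond mul alpha delta) (delta_refl : forall s, delta s s).

Lemma term_cond2_mulI a c d :
  alpha ord0 a e -> alpha ord_max c d -> a ** c = a ** d -> delta c d.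
Proof.
move=> Ha Hcd acd.
have := term_cond2_apply tc
  (f := fun x => (if x ord0 then e else a) ** (if x ord_max then d else c)).
by pt_simpl; apply; [Mgen_auto | rewrite acd].
Qed.

Lemma term_cond2_mulIr a c d :
  alpha ord0 a e -> alpha ord_max c d -> c ** a = d ** a -> delta c d.
Proof.
move=> Ha Hcd cad.
have := term_cond2_apply tc
  (f := fun x => (if x ord_max then d else c) ** (if x ord0 then e else a)).
by pt_simpl; apply; [Mgen_auto | rewrite cad].
Qed.

Lemma term_cond2_swap x y :
  alpha ord0 e y -> alpha ord_max e x -> alpha ord_max x e -> delta (y ** x) (x ** y).
Proof.
move=> Hy Hx Hx'.
have := term_cond2_apply tc (f := fun z => (if z ord_max then x else e) **
  (if z ord0 then y else e) ** (if z ord_max then e else x)).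
by pt_simpl; apply; Mgen_auto.
Qed.

End Binary.

Section Comm11.

Let comm11_tc : term_cond mul (fun _ => total) comm11 :=
  commutator_term_cond (alpha := fun _ => total).
Let comm11_refl s : comm11 s s.
Proof. by case: (@commutator_congr S mul 1 (fun _ => total)) => Hrefl _ _ _; apply: Hrefl. Qed.

Lemma comm11_of_mulI a c d : a ** c = a ** d -> comm11 c d.
Proof. exact: term_cond2_mulI comm11_tc comm11_refl a c d I I. Qed.

Lemma comm11_of_mulIr a c d : c ** a = d ** a -> comm11 c d.
Proof. exact: term_cond2_mulIr comm11_tc comm11_refl a c d I I. Qed.

Lemma comm11_swap x y : comm11 (y ** x) (x ** y).
Proof. exact: term_cond2_swap comm11_tc comm11_refl x y I I I. Qed.

End Comm11.

Section Supernilpotent1.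
Hypothesis tc : term_cond mul (fun _ : 'I_2 => total) (@eq S).

Lemma tc1_mulI : right_injective mul.
Proof. by move=> a c d; apply: term_cond2_mulI tc _ a c d I I. Qed.

Lemma tc1_mulC : commutative mul.
Proof. by move=> x y; apply: term_cond2_swap tc _ y x I I I. Qed.

End Supernilpotent1.

Section Supernilpotent2.
Hypothesis tc : term_cond mul (fun _ : 'I_3 => total) (@eq S).

Lemma tc3_mulI : right_injective mul.
Proof.
move=> a c d acd.
have := term_cond3_apply tc (f := fun x => (if x ord0 then e else a) **
  (if x ord1_3 then e else a) ** (if x ord_max then d else c)).
by pt_simpl; apply; Mgen_auto; rewrite -?mulA acd.
Qed.

Lemma tc3_mulIr : left_injective mul.
Proof.
move=> a c d cad.
have := term_cond3_apply tc (f := fun x => (if x ord_max then d else c) **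
  (if x ord0 then e else a) ** (if x ord1_3 then e else a)).
by pt_simpl; apply; Mgen_auto; rewrite cad.
Qed.

Lemma tc3_twisted_malcev : twisted_malcev_law.
Proof.
move=> a b w; pose c := a ** a ** b ** a.
(* The middle factor equals c at every point of {0,1}^2 except (1,1), where it is a a a b. *)
have := term_cond3_apply tc (f := fun x => (if x ord_max then e else c ** w) **
  ((if x ord0 then a else e) ** (if x ord1_3 then a ** a ** b else a) **
   (if x ord0 then e else a) ** (if x ord1_3 then e else b ** a)) **
  (if x ord_max then w else w) ** (if x ord_max then c ** w else e)).
rewrite /c; pt_simpl => H.
have {}H : a ** a ** b ** a ** w ** a ** a ** a ** b ** w =
           a ** a ** a ** b ** w ** a ** a ** b ** a ** w by apply: H; Mgen_auto.
move/tc3_mulIr: H; rewrite -!mulA => /tc3_mulI /tc3_mulI; rewrite !mulA => H.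
by rewrite H.
Qed.

End Supernilpotent2.

Section LeftRightNilpotent2.
Hypothesis tcL : term_cond mul (fun i : 'I_2 => if val i == 0 then total else comm11) (@eq S).
Hypothesis tcR : term_cond mul (fun i : 'I_2 => if val i == 0 then comm11 else total) (@eq S).

Lemma tcL_mulI : right_injective mul.
Proof. by move=> a c d acd; apply: term_cond2_mulI tcL _ a c d I (comm11_of_mulI acd) acd. Qed.

Lemma tcL_mulIr : left_injective mul.
Proof. by move=> a c d cad; apply: term_cond2_mulIr tcL _ a c d I (comm11_of_mulIr cad) cad. Qed.

Lemma tcLR_malcev x y w : x ** y ** w ** y ** x = y ** x ** w ** x ** y.
Proof.
pose c := x ** y.
have := term_cond2_apply tcR (f := fun z => (if z ord_max then e else c ** w) **
  (if z ord0 then y ** x else c) ** (if z ord_max then w else w) **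
  (if z ord_max then c ** w else e)).
rewrite /c; pt_simpl => H.
have {}H : x ** y ** w ** y ** x ** w = y ** x ** w ** x ** y ** w.
  by apply: H; Mgen_auto; apply: comm11_swap.
exact: tcL_mulIr H.
Qed.

Lemma tcLR_twisted_malcev : twisted_malcev_law.
Proof. by move=> a b w; have := tcLR_malcev a b (w ** a ** a); rewrite !mulA. Qed.

End LeftRightNilpotent2.

End MonoidLaws.

(** * Groups of class at most two *)

Section Group.
Variables (G : Type) (gmul : G -> G -> G) (ginv : G -> G) (ge : G).
Hypothesis group_G : is_group gmul ginv ge.
Local Infix "*" := gmul.
Local Notation "x ^-1" := (ginv x).
Local Notation "1" := ge.
Local Notation "[ x , y ]" := (gcomm gmul ginv x y).

Lemma gmulA : associative gmul. Proof. by case: group_G. Qed.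
Lemma g1mul : left_id 1 gmul. Proof. by case: group_G. Qed.
Lemma gmul1 : right_id 1 gmul. Proof. by case: group_G. Qed.
Lemma gVmul x : x^-1 * x = 1. Proof. by case: group_G. Qed.
Lemma gmulV x : x * x^-1 = 1. Proof. by case: group_G. Qed.

Lemma gmulKV x y : x^-1 * (x * y) = y. Proof. by rewrite gmulA gVmul g1mul. Qed.
Lemma gmulVK x y : x * (x^-1 * y) = y. Proof. by rewrite gmulA gmulV g1mul. Qed.

Lemma gmulI : right_injective gmul.
Proof. by move=> x y z E; rewrite -(gmulKV x y) E gmulKV. Qed.

Lemma gmulIr : left_injective gmul.
Proof. by move=> x y z E; rewrite -(gmul1 y) -(gmulV x) gmulA E -gmulA gmulV gmul1. Qed.

Lemma gmul_eq1 x z : x * z = x -> z = 1.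
Proof. by move=> E; apply: (@gmulI x); rewrite E gmul1. Qed.

Lemma ginv_unique x y : x * y = 1 -> y = x^-1.
Proof. by move=> E; apply: (@gmulI x); rewrite E gmulV. Qed.

Lemma ginvK x : (x^-1)^-1 = x.
Proof. by symmetry; apply: ginv_unique; rewrite gVmul. Qed.

Lemma ginvM x y : (x * y)^-1 = y^-1 * x^-1.
Proof. by symmetry; apply: ginv_unique; rewrite -gmulA gmulVK gmulV. Qed.

Lemma ginv1 : 1^-1 = 1.
Proof. by symmetry; apply: ginv_unique; rewrite gmul1. Qed.

Definition central (z : G) := forall y, z * y = y * z.

Lemma central1 : central 1. Proof. by move=> y; rewrite g1mul gmul1. Qed.

Lemma centralM x y : central x -> central y -> central (x * y).
Proof. by move=> Cx Cy z; rewrite -gmulA Cy gmulA Cx gmulA. Qed.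

Lemma centralV x : central x -> central (x^-1).
Proof. by move=> Cx z; apply: (@gmulI x); rewrite gmulVK gmulA Cx -gmulA gmulV gmul1. Qed.

Lemma central_mulCA z x y : central z -> x * (z * y) = z * (x * y).
Proof. by move=> Cz; rewrite gmulA -Cz -gmulA. Qed.

Lemma central_mulACA a b c d : central b -> a * b * (c * d) = a * c * (b * d).
Proof. by move=> Cb; rewrite -!gmulA [in RHS](central_mulCA _ _ Cb). Qed.

Lemma commuteV x y : x * y = y * x -> x * y^-1 = y^-1 * x.
Proof. by move=> E; apply: (@gmulI y); rewrite gmulVK gmulA -E -gmulA gmulV gmul1. Qed.

Lemma gcommE x y : [x, y] = x^-1 * (y^-1 * (x * y)).
Proof. by rewrite /gcomm -gmulA. Qed.

Lemma gcomm_swap x y : x * y = y * x * [x, y].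
Proof. by rewrite gcommE -!gmulA !gmulVK. Qed.

Lemma gcommC x y : [y, x] = [x, y]^-1.
Proof. by apply: ginv_unique; rewrite !gcommE -!gmulA !gmulVK gmulKV gVmul. Qed.

Lemma gcomm_eq1 x y : x * y = y * x -> [x, y] = 1.
Proof. by move=> E; rewrite gcommE E gmulKV gVmul. Qed.

Lemma central_of_gcomm1 x : (forall y, [x, y] = 1) -> central x.
Proof. by move=> H y; rewrite gcomm_swap H gmul1. Qed.

Lemma gcommMl x z y : central [x, y] -> [x * z, y] = [x, y] * [z, y].
Proof.
move=> Cxy; apply: (@gmulI (y * (x * z))); rewrite -gcomm_swap.
rewrite -(gmulA x z y) (gcomm_swap z y) !(gmulA x) (gcomm_swap x y).
move: [x, y] [z, y] Cxy => c d Cc.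
by rewrite -!gmulA [in RHS](central_mulCA _ _ Cc).
Qed.

Lemma gcommVl x y : central [x, y] -> [x^-1, y] = [x, y]^-1.
Proof.
move=> Cxy; apply: ginv_unique.
by rewrite -gcommMl // gmulV gcomm_eq1 // g1mul gmul1.
Qed.

Lemma subgrp_gen_ind (P A : G -> Prop) : P 1 -> (forall x y, P x -> P y -> P (x * y)) ->
  (forall x, P x -> P x^-1) -> (forall x, A x -> P x) ->
  forall x, subgrp_gen gmul ginv ge A x -> P x.
Proof. by move=> P1 PM PV PA x Hx; elim: Hx => [y Ay | | y z _ Py _ Pz | y _ Py]; auto. Qed.

Lemma nil1_commute : nilpotent_group gmul ginv ge 1 -> forall x y, x * y = y * x.
Proof.
move=> nil x y; rewrite gcomm_swap (nil [x, y]) ?gmul1 //.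
by apply: sg_base; exists x, y.
Qed.

Lemma nil1_of_gcomm1 : (forall x y, [x, y] = 1) -> nilpotent_group gmul ginv ge 1.
Proof.
move=> H; apply: subgrp_gen_ind => [| x y -> -> | x -> | _ [x [y [_ ->]]]] //.
- by rewrite g1mul.
- by rewrite ginv1.
Qed.

Lemma nil2_central_gcomm : nilpotent_group gmul ginv ge 2 -> forall x y, central [x, y].
Proof.
move=> nil x y; apply: central_of_gcomm1 => w; apply: nil; apply: sg_base.
by exists [x, y], w; split=> //; apply: sg_base; exists x, y.
Qed.

Lemma nil2_of_central_gcomm : (forall x y, central [x, y]) -> nilpotent_group gmul ginv ge 2.
Proof.
move=> H; apply: subgrp_gen_ind => [| x y -> -> | x -> | _ [x [y [Cx ->]]]] //.
- by rewrite g1mul.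
- by rewrite ginv1.
apply: gcomm_eq1; apply: (@subgrp_gen_ind central _ _ _ _ _ _ Cx) => [||| _ [a [b [_ ->]]]] //.
- exact: central1.
- exact: centralM.
- exact: centralV.
Qed.

Section Class2.
Hypothesis class2 : forall x y, central [x, y].

Lemma gcommMr k x y : [k, x * y] = [k, x] * [k, y].
Proof. by rewrite gcommC gcommMl // ginvM -!gcommC; apply: class2. Qed.

Lemma class2_shift_mul x y u v c d : central u -> central v ->
  x * (u * c) * (y * (v * d)) = x * y * (u * ([c, y] * v) * (c * d)).
Proof.
move=> Cu Cv; move: (gcomm_swap c y) (class2 c y); move: [c, y] => k Eky Ck.
rewrite -!gmulA (gmulA c y) Eky -!gmulA [in RHS](central_mulCA _ _ Cu).
by rewrite (central_mulCA _ _ Ck) (central_mulCA _ _ Cv).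
Qed.

End Class2.

Lemma twisted_malcev_gcomm a b w :
  a * b * w * a * a * b * a = b * a * w * a * a * a * b ->
  a * b * a * a * b * a = b * a * a * a * a * b -> [a, b] * w = w * [a, b].
Proof.
move=> Ew E1; apply: (@gmulIr (a * (a * (b * a)))).
move: Ew E1; rewrite !gcommE -!gmulA => Ew E1.
by rewrite Ew E1 !gmulKV.
Qed.

Section Generators.
Variable T : G -> Prop.
Hypothesis T_gen : forall g, exists a b, [/\ T a, T b & g = a * b^-1].

Lemma central_of_commute_gen k : (forall t, T t -> k * t = t * k) -> central k.
Proof.
move=> H g; have [a [b [Ta Tb ->]]] := T_gen g.
by rewrite gmulA H // -!gmulA (commuteV (H b Tb)).
Qed.

Variable Z : G -> Prop.
Hypotheses (Z_central : forall z, Z z -> central z)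
  (ZM : forall x y, Z x -> Z y -> Z (x * y)) (ZV : forall x, Z x -> Z x^-1).
Hypothesis gcomm_gen_in_Z : forall a b, T a -> T b -> Z [a, b].

Let gcomm_divl_in_Z y x1 x2 : Z [x1, y] -> Z [x2, y] -> Z [x1 * x2^-1, y].
Proof.
move=> Z1y Z2y; rewrite gcommMl; last exact: Z_central.
by apply: ZM => //; rewrite gcommVl; [apply: ZV | apply: Z_central].
Qed.

Let gcomm_genr_in_Z g t : T t -> Z [g, t].
Proof.
move=> Tt; have [a [b [Ta Tb ->]]] := T_gen g.
by apply: gcomm_divl_in_Z; apply: gcomm_gen_in_Z.
Qed.

Lemma gcomm_in_Z x y : Z [x, y].
Proof.
have [a [b [Ta Tb ->]]] := T_gen y.
rewrite gcommC; apply: ZV; apply: gcomm_divl_in_Z;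
  by rewrite gcommC; apply: ZV; exact: gcomm_genr_in_Z.
Qed.

End Generators.

(** * Term conditions in subsemigroups of groups *)

Section Subsemigroup.
Variables (S : Type) (mul : S -> S -> S).
Variable h : S -> G.
Hypotheses (h_inj : injective h) (hM : forall a b, h (mul a b) = gmul (h a) (h b)).

Definition eqmodZ (c d : S) := central ((h c)^-1 * h d).

Lemma eqmodZ_congr : is_congr mul eqmodZ.
Proof.
split=> [a | a b | a b c | a b c d]; rewrite /eqmodZ.
- by rewrite gVmul; apply: central1.
- by move=> Cab; rewrite -(ginvK (h a)) -ginvM; apply: centralV.
- move=> Cab Cbc; rewrite -(gmulVK (h b) (h c)) gmulA; exact: centralM.
- move=> Cab Ccd; rewrite !hM ginvM -gmulA (gmulA (h a)^-1) (central_mulCA _ _ Cab).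
  exact: centralM.
Qed.

Lemma Mgen_central_shift m (alpha : 'I_m.+1 -> S -> S -> Prop) (i : 'I_m.+1) f :
  (forall c d, alpha i c d -> eqmodZ c d) -> Mgen mul alpha f ->
  exists2 z, central z & forall x y, (forall j, j != i -> x j = y j) ->
    x i = false -> y i = true -> h (f y) = h (f x) * z.
Proof.
move=> Hi; elim=> [k a b Hab | f1 f2 _ [z1 C1 E1] _ [z2 C2 E2]].
- have [Eki | nki] := eqVneq k i.
    subst k; exists ((h a)^-1 * h b); first exact: Hi.
    by move=> x y _ /= -> ->; rewrite gmulVK.
  by exists 1; [exact: central1 | move=> x y Exy _ _ /=; rewrite gmul1 (Exy k nki)].
- exists (z1 * z2); first exact: centralM.
  move=> x y Exy x0 y1; rewrite !hM (E1 x y) // (E2 x y) // -!gmulA.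
  by rewrite [in RHS](central_mulCA _ _ C1).
Qed.

Lemma term_cond_eq_of_central m (alpha : 'I_m.+2 -> S -> S -> Prop) (i : 'I_m.+2) :
  (forall c d, alpha i c d -> eqmodZ c d) -> term_cond mul alpha (@eq S).
Proof.
move=> Hi f Mf Hf; have [z Cz Ez] := Mgen_central_shift Hi Mf.
case: (unliftP ord_max i) => [j Ei | Ei]; subst i.
- pose x k := k != j.
  have Ex b : h (f (ext_pt xpredT b)) = h (f (ext_pt x b)) * z.
    apply: Ez; rewrite ?ext_pt_lift /x ?eqxx //.
    by apply: ext_pt_eq_off => k /= ->.
  by apply: h_inj; rewrite !Ex Hf // => allT; move: (allT j); rewrite /x eqxx.
- pose x0 (_ : 'I_m.+1) := false.
  have Ex x : h (f (ext_pt x true)) = h (f (ext_pt x false)) * z.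
    apply: Ez; rewrite ?ext_pt_max // => k.
    by case: (unliftP ord_max k) => [k' -> | ->]; rewrite ?ext_pt_lift ?eqxx.
  have z1 : z = 1.
    by apply: (@gmul_eq1 (h (f (ext_pt x0 false)))); rewrite -Ex Hf // => /(_ ord0).
  by apply: h_inj; rewrite Ex z1 gmul1.
Qed.

Section Class2.
Hypothesis class2 : forall x y, central [x, y].

Definition modular m (v : ('I_m -> bool) -> G) :=
  forall x y, v x * v y = v (fun j => x j && y j) * v (fun j => x j || y j).

Lemma modularM m (v w : ('I_m -> bool) -> G) :
  (forall x, central (w x)) -> modular v -> modular w -> modular (fun x => v x * w x).
Proof.
by move=> Cw Mv Mw x y; rewrite !(central_mulACA _ _ _ (Cw _)) Mv Mw.
Qed.

Lemma gcomm_modular k m (alpha : 'I_m.+1 -> S -> S -> Prop) g :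
  Mgen mul alpha g -> modular (fun x => [k, h (g (ext_pt x false))]).
Proof.
elim=> [i a b _ | g1 g2 _ M1 _ M2].
- case: (unliftP ord_max i) => [j -> | ->] x y /=; rewrite ?ext_pt_lift ?ext_pt_max //.
  by case: (x j); case: (y j) => //=; apply: class2.
- under [fun x => _]functional_extensionality => x do rewrite /= hM gcommMr //.
  exact: modularM.
Qed.

Lemma Mgen_class2_shift m (alpha : 'I_m.+1 -> S -> S -> Prop) f : Mgen mul alpha f ->
  exists d (v : ('I_m -> bool) -> G), [/\ forall x, central (v x), modular v &
    forall x, h (f (ext_pt x true)) = h (f (ext_pt x false)) * (v x * d)].
Proof.
elim=> [i a b _ | f1 f2 M1 [d1 [v1 [C1 MV1 E1]]] M2 [d2 [v2 [C2 MV2 E2]]]].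
- exists (if unlift ord_max i is Some _ then 1 else (h a)^-1 * h b), (fun _ => 1).
  split=> [x | x y | x]; [exact: central1 | by [] |].
  by case: (unliftP ord_max i) => [j -> | ->]; rewrite /= ?liftK ?unlift_none ?ext_pt_lift
    ?ext_pt_max g1mul ?gmul1 ?gmulVK.
- exists (d1 * d2), (fun x => v1 x * ([d1, h (f2 (ext_pt x false))] * v2 x)); split.
  + by move=> x; apply: centralM => //; apply: centralM.
  + apply: modularM => [x|//|]; first by apply: centralM.
    by apply: modularM => //; exact: gcomm_modular M2.
  + by move=> x; rewrite /= !hM E1 E2 class2_shift_mul.
Qed.

Lemma eqmodZ_term_cond m (alpha : 'I_m.+2 -> S -> S -> Prop) : term_cond mul alpha eqmodZ.
Proof.
move=> f Mf Hf; have [d [v [Cv _ Ev]]] := Mgen_class2_shift Mf.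
have Cv0d : central (v (fun _ => false) * d).
  by have := Hf (fun _ => false) (fun allT => notF (allT ord0)); rewrite /eqmodZ Ev gmulKV.
have Cd : central d by rewrite -(gmulKV (v (fun _ => false)) d); apply/centralM/Cv0d/centralV.
by rewrite /eqmodZ Ev gmulKV; apply: centralM.
Qed.

Lemma eq_term_cond_class2 m (alpha : 'I_m.+3 -> S -> S -> Prop) : term_cond mul alpha (@eq S).
Proof.
move=> f Mf Hf; have [d [v [Cv Mv Ev]]] := Mgen_class2_shift Mf.
have vd1 x : ~ (forall j, x j = true) -> v x * d = 1.
  by move=> Hx; apply: (@gmul_eq1 (h (f (ext_pt x false)))); rewrite -Ev Hf.
pose x0 (j : 'I_m.+2) := j != ord0; pose x1 (j : 'I_m.+2) := j != ord_max.
have x01T : (fun j => x0 j || x1 j) = xpredT.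
  by apply: functional_extensionality => j; rewrite /x0 /x1; case: eqVneq => // ->.
have v0d : v x0 * d = 1 by apply: vd1 => /(_ ord0); rewrite /x0 eqxx.
have v1d : v x1 * d = 1 by apply: vd1 => /(_ ord_max); rewrite /x1 eqxx.
have v01d : v (fun j => x0 j && x1 j) * d = 1 by apply: vd1 => /(_ ord0); rewrite /x0 eqxx.
(* x0 and x1 avoid the top point and so does their meet, but their join is the top point. *)
have vTd : v xpredT * d = 1.
  rewrite -[LHS]g1mul -{1}v01d -(central_mulACA _ _ _ (Cv _)) -x01T -Mv.
  by rewrite central_mulACA // v0d v1d g1mul.
by apply: h_inj; rewrite Ev vTd gmul1.
Qed.

Lemma comm11_eqmodZ c d : comm11 mul c d -> eqmodZ c d.
Proof. by move=> Hcd; apply: Hcd; [exact: eqmodZ_congr | exact: eqmodZ_term_cond]. Qed.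

End Class2.
End Subsemigroup.
End Group.

(** * Groups of right fractions *)

Section RightFractions.
Variables (S : Type) (mul : S -> S -> S) (e : S).
Hypotheses (mulA : associative mul) (mul1s : left_id e mul) (muls1 : right_id e mul).
Hypotheses (mulI : right_injective mul) (mulIr : left_injective mul).
Local Infix "**" := mul (at level 40, left associativity).
Variables (ore_l ore_r : S -> S -> S).
Hypothesis ore : forall b c, b ** ore_l b c = c ** ore_r b c.

(* The pair (a, b) stands for the fraction a b^-1. *)
Definition frac_eq (p q : S * S) : Prop :=
  exists u v, p.1 ** u = q.1 ** v /\ p.2 ** u = q.2 ** v.

Lemma frac_eq_refl p : frac_eq p p.
Proof. by exists e, e. Qed.

Lemma frac_eq_sym p q : frac_eq p q -> frac_eq q p.
Proof. by case=> u [v [E1 E2]]; exists v, u. Qed.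

Lemma frac_eq_trans p q r : frac_eq p q -> frac_eq q r -> frac_eq p r.
Proof.
case=> u [v [E1 E2]] [u' [v' [E1' E2']]]; have E := ore v u'.
exists (u ** ore_l v u'), (v' ** ore_r v u'); split.
- by rewrite mulA E1 -mulA E mulA E1' mulA.
- by rewrite mulA E2 -mulA E mulA E2' mulA.
Qed.

Lemma frac_eq_scale a b r : frac_eq (a ** r, b ** r) (a, b).
Proof. by exists e, r; rewrite !muls1. Qed.

(* a b^-1 c d^-1 = (a t) (d s)^-1 whenever b t = c s. *)
Definition is_frac_mul (p q z : S * S) : Prop :=
  exists t s, p.2 ** t = q.1 ** s /\ z = (p.1 ** t, q.2 ** s).

Lemma is_frac_mul_unique p q z z' :
  is_frac_mul p q z -> is_frac_mul p q z' -> frac_eq z z'.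
Proof.
case=> t [s [E ->]] [t' [s' [E' ->]]]; have F := ore t t'.
exists (ore_l t t'), (ore_r t t'); split; rewrite /= -!mulA ?F //.
by congr (_ ** _); apply: (@mulI q.1); rewrite !mulA -E -E' -!mulA F.
Qed.

Lemma is_frac_mul_scalel a b u q z z' :
  is_frac_mul (a, b) q z -> is_frac_mul (a ** u, b ** u) q z' -> frac_eq z z'.
Proof.
case=> t [s [E ->]] Hz'; have F := ore u t.
have Hz'' : is_frac_mul (a ** u, b ** u) q (a ** u ** ore_l u t, q.2 ** (s ** ore_r u t)).
  by exists (ore_l u t), (s ** ore_r u t); rewrite /= -mulA F mulA E mulA.
apply: frac_eq_sym; apply: frac_eq_trans (is_frac_mul_unique Hz' Hz'') _.
by rewrite -mulA F mulA (mulA q.2); apply: frac_eq_scale.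
Qed.

Lemma is_frac_mul_scaler p c d u z z' :
  is_frac_mul p (c, d) z -> is_frac_mul p (c ** u, d ** u) z' -> frac_eq z z'.
Proof.
case=> t [s [E ->]] Hz'; have F := ore s u.
have Hz'' : is_frac_mul p (c ** u, d ** u) (p.1 ** (t ** ore_l s u), d ** u ** ore_r s u).
  by exists (t ** ore_l s u), (ore_r s u); rewrite /= mulA E -mulA F mulA.
apply: frac_eq_sym; apply: frac_eq_trans (is_frac_mul_unique Hz' Hz'') _.
by rewrite /= -(mulA d) -F !mulA; apply: frac_eq_scale.
Qed.

Lemma is_frac_mul_ex p q : exists z, is_frac_mul p q z.
Proof.
by exists (p.1 ** ore_l p.2 q.1, q.2 ** ore_r p.2 q.1), (ore_l p.2 q.1), (ore_r p.2 q.1).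
Qed.

Lemma is_frac_mul_eql p p' q z z' :
  frac_eq p p' -> is_frac_mul p q z -> is_frac_mul p' q z' -> frac_eq z z'.
Proof.
case: p p' => a b [a' b'] [u [v [/= Ea Eb]]] Hz Hz'.
have [z1 Hz1] := is_frac_mul_ex (a ** u, b ** u) q.
apply: frac_eq_trans (is_frac_mul_scalel Hz Hz1) _.
by rewrite Ea Eb in Hz1; apply: frac_eq_sym (is_frac_mul_scalel Hz' Hz1).
Qed.

Lemma is_frac_mul_eqr p q q' z z' :
  frac_eq q q' -> is_frac_mul p q z -> is_frac_mul p q' z' -> frac_eq z z'.
Proof.
case: q q' => c d [c' d'] [u [v [/= Ec Ed]]] Hz Hz'.
have [z1 Hz1] := is_frac_mul_ex p (c ** u, d ** u).
apply: frac_eq_trans (is_frac_mul_scaler Hz Hz1) _.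
by rewrite Ec Ed in Hz1; apply: frac_eq_sym (is_frac_mul_scaler Hz' Hz1).
Qed.

Lemma is_frac_mul_eq p p' q q' z z' : frac_eq p p' -> frac_eq q q' ->
  is_frac_mul p q z -> is_frac_mul p' q' z' -> frac_eq z z'.
Proof.
move=> Ep Eq Hz Hz'; have [z1 Hz1] := is_frac_mul_ex p' q.
exact: frac_eq_trans (is_frac_mul_eql Ep Hz Hz1) (is_frac_mul_eqr Eq Hz1 Hz').
Qed.

Record frac := Frac { frac_class : S * S -> Prop; _ : exists p, frac_class = frac_eq p }.

Definition frac_of (p : S * S) : frac := @Frac (frac_eq p) (ex_intro _ p erefl).

Lemma frac_ofP p q : frac_of p = frac_of q <-> frac_eq p q.
Proof.
split=> [E | Epq].
  have Hq : frac_class (frac_of q) q := frac_eq_refl q.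
  by rewrite -E in Hq.
have E : frac_eq p = frac_eq q.
  apply: functional_extensionality => r; apply: propositional_extensionality.
  by split; [apply: frac_eq_trans (frac_eq_sym Epq) | apply: frac_eq_trans Epq].
rewrite /frac_of; move: (ex_intro _ p _) (ex_intro _ q _); rewrite E => H1 H2.
by congr Frac; exact: proof_irrelevance.
Qed.

Definition frac_repr (x : frac) : S * S :=
  let: Frac _ Px := x in proj1_sig (constructive_indefinite_description _ Px).

Lemma frac_reprK x : frac_of (frac_repr x) = x.
Proof.
case: x => P Px /=; case: (constructive_indefinite_description _ _) => p /= Ep.
by subst P; congr Frac; exact: proof_irrelevance.
Qed.

Lemma frac_ind (x : frac) : exists a b, x = frac_of (a, b).
Proof. by exists (frac_repr x).1, (frac_repr x).2; rewrite -surjective_pairing frac_reprK. Qed.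

Definition fmul (x y : frac) : frac :=
  let p := frac_repr x in let q := frac_repr y in
  frac_of (p.1 ** ore_l p.2 q.1, q.2 ** ore_r p.2 q.1).

Definition finv (x : frac) : frac := frac_of ((frac_repr x).2, (frac_repr x).1).

Definition fone : frac := frac_of (e, e).

Lemma fmul_frac p q z : is_frac_mul p q z -> fmul (frac_of p) (frac_of q) = frac_of z.
Proof.
move=> Hz; apply/frac_ofP; rewrite /fmul.
set p' := frac_repr _; set q' := frac_repr _.
apply: (@is_frac_mul_eq p' p q' q _ _ _ _ _ Hz).
- by apply/frac_ofP; rewrite frac_reprK.
- by apply/frac_ofP; rewrite frac_reprK.
- by exists (ore_l p'.2 q'.1), (ore_r p'.2 q'.1).
Qed.

Lemma fmul_frac_ex a b c d : exists t s,
  b ** t = c ** s /\ fmul (frac_of (a, b)) (frac_of (c, d)) = frac_of (a ** t, d ** s).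
Proof.
exists (ore_l b c), (ore_r b c); split; first exact: ore.
by apply: fmul_frac; exists (ore_l b c), (ore_r b c).
Qed.

Lemma finv_frac a b : finv (frac_of (a, b)) = frac_of (b, a).
Proof.
apply/frac_ofP; have /frac_ofP[u [v [E1 E2]]] := frac_reprK (frac_of (a, b)).
by exists u, v.
Qed.

Lemma frac_group : is_group fmul finv fone.
Proof.
split.
- move=> x y z.
  have [a [b ->]] := frac_ind x; have [c [d ->]] := frac_ind y; have [f [g ->]] := frac_ind z.
  have [t [s [E ->]]] := fmul_frac_ex a b c d.
  have [t' [s' [E' ->]]] := fmul_frac_ex (a ** t) (d ** s) f g.
  rewrite (@fmul_frac (c, d) (f, g) (c ** (s ** t'), g ** s')); last first.
    by exists (s ** t'), s'; rewrite mulA E'.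
  by apply: fmul_frac; exists (t ** t'), e; rewrite /= !muls1 !mulA E.
- move=> x; have [a [b ->]] := frac_ind x.
  by apply: fmul_frac; exists a, e; rewrite /= !mul1s !muls1.
- move=> x; have [a [b ->]] := frac_ind x.
  by apply: fmul_frac; exists e, b; rewrite /= !mul1s !muls1.
- move=> x; have [a [b ->]] := frac_ind x; rewrite finv_frac.
  rewrite (@fmul_frac (b, a) (a, b) (b, b)); last by exists e, e; rewrite /= !muls1.
  by apply/frac_ofP; exists e, b; rewrite /= !muls1 !mul1s.
- move=> x; have [a [b ->]] := frac_ind x; rewrite finv_frac.
  rewrite (@fmul_frac (a, b) (b, a) (a, a)); last by exists e, e; rewrite /= !muls1.
  by apply/frac_ofP; exists e, a; rewrite /= !muls1 !mul1s.
Qed.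

Definition frac_emb (s : S) : frac := frac_of (s, e).

Lemma frac_embM a b : frac_emb (a ** b) = fmul (frac_emb a) (frac_emb b).
Proof. by symmetry; apply: fmul_frac; exists b, e; rewrite /= !mul1s !muls1. Qed.

Lemma frac_emb_inj : injective frac_emb.
Proof. by move=> a c /frac_ofP[u [v [/= E]]]; rewrite !mul1s => Euv; subst v; apply: mulIr E. Qed.

Lemma frac_emb_gen g : exists a b,
  [/\ exists s, a = frac_emb s, exists s, b = frac_emb s & g = fmul a (finv b)].
Proof.
have [a [b ->]] := frac_ind g; exists (frac_emb a), (frac_emb b).
split; [by exists a | by exists b |].
by rewrite finv_frac; symmetry; apply: fmul_frac; exists e, e; rewrite /= !muls1.
Qed.

End RightFractions.

Section FractionGroupNilpotency.
Variables (S : Type) (mul : S -> S -> S) (e : S).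
Hypotheses (mulA : associative mul) (mul1s : left_id e mul) (muls1 : right_id e mul).
Hypotheses (mulI : right_injective mul) (mulIr : left_injective mul).
Variables (ore_l ore_r : S -> S -> S).
Hypothesis ore : forall b c, mul b (ore_l b c) = mul c (ore_r b c).

Local Notation fmul := (fmul ore_l ore_r).
Local Notation finv := (@finv S mul).
Local Notation fone := (fone mul e).
Local Notation emb := (frac_emb mul e).
Let group_frac := frac_group mulA mul1s muls1 mulI ore.
Let frac_gen := frac_emb_gen mulA muls1 mulI ore.
Let embM := frac_embM mulA mul1s muls1 mulI ore.

Lemma frac_embeds n : nilpotent_group fmul finv fone n -> embeds_into_nilpotent_group mul n.
Proof.
move=> nil; exists (frac mul), fmul, finv, fone; split=> //.
by exists emb; split; [exact: (frac_emb_inj mulA mul1s mulIr ore) | exact: embM].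
Qed.

Lemma frac_nil1 : commutative mul -> nilpotent_group fmul finv fone 1.
Proof.
move=> mulC; apply: nil1_of_gcomm1 group_frac _ => x y.
apply: (gcomm_in_Z group_frac frac_gen (Z := eq^~ fone))
  => [z -> | _ _ -> -> | _ -> | _ _ [a ->] [b ->]].
- exact: central1 group_frac.
- exact: g1mul group_frac fone.
- exact: ginv1 group_frac.
- by apply: (gcomm_eq1 group_frac); rewrite -!embM mulC.
Qed.

Lemma frac_nil2 : twisted_malcev_law mul -> nilpotent_group fmul finv fone 2.
Proof.
move=> tw; apply: nil2_of_central_gcomm group_frac _ => x y.
apply: (gcomm_in_Z group_frac frac_gen (Z := central fmul)) => [// | | | _ _ [a ->] [b ->]].
- exact: centralM group_frac.
- exact: centralV group_frac.
apply: (central_of_commute_gen group_frac frac_gen) => _ [w ->].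
apply: (twisted_malcev_gcomm group_frac); rewrite -!embM; congr emb; first exact: tw.
by have := tw a b e; rewrite !muls1.
Qed.

End FractionGroupNilpotency.

Theorem commutative_embeds_nil1 (S : Type) (mul : S -> S -> S) (e : S)
    (mulA : associative mul) (mul1s : left_id e mul) (muls1 : right_id e mul) :
  left_injective mul -> commutative mul -> embeds_into_nilpotent_group mul 1.
Proof.
move=> mulIr mulC.
have mulI : right_injective mul by move=> a c d; rewrite ![mul a _]mulC; apply: mulIr.
have ore b c : mul b c = mul c b := mulC b c.
apply: (frac_embeds (ore_l := fun _ c => c) (ore_r := fun b _ => b)
  mulA mul1s muls1 mulI mulIr ore).
exact: frac_nil1.
Qed.

Theorem twisted_malcev_embeds_nil2 (S : Type) (mul : S -> S -> S) (e : S)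
    (mulA : associative mul) (mul1s : left_id e mul) (muls1 : right_id e mul) :
  right_injective mul -> left_injective mul -> twisted_malcev_law mul ->
  embeds_into_nilpotent_group mul 2.
Proof.
move=> mulI mulIr tw.
have ore b c : mul b (mul (mul (mul (mul c b) b) c) b) = mul c (mul (mul (mul (mul b b) b) b) c).
  by have := tw b c e; rewrite !muls1 !mulA.
apply: (frac_embeds mulA mul1s muls1 mulI mulIr ore).
exact: frac_nil2.
Qed.

Section Equivalences.
Variables (S : Type) (mul : S -> S -> S) (e : S).
Hypotheses (mulA : associative mul) (mul1s : left_id e mul) (muls1 : right_id e mul).
Local Notation total := (@total_rel S).

Lemma supernilpotent0 : supernilpotent mul 0 <-> forall a b : S, a = b.
Proof.
rewrite /supernilpotent commutator_trivialP; split=> [tc a b | triv f _ _]; last exact: triv.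
have := tc _ (@Mgen_gen S mul 0 (fun _ => total) ord_max a b I); rewrite /= !ext_pt_max.
by apply=> x allT; exfalso; apply: allT => -[].
Qed.

Lemma embeds0 : embeds_into_nilpotent_group mul 0 <-> forall a b : S, a = b.
Proof.
split=> [[G [gmul [ginv [ge [_ nil [h [h_inj _]]]]]]] a b | triv].
  by apply: h_inj; rewrite (nil (h a) I) (nil (h b) I).
exists unit, (fun _ _ => tt), (fun _ => tt), tt; split.
- by split=> // -[].
- by case.
- by exists (fun _ => tt); split=> // x y _; apply: triv.
Qed.

Lemma equivalences0 :
  (supernilpotent mul 0 <-> (left_nilpotent mul 0 /\ right_nilpotent mul 0)) /\
  ((left_nilpotent mul 0 /\ right_nilpotent mul 0) <-> embeds_into_nilpotent_group mul 0).
Proof.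
have lr0 : left_nilpotent mul 0 /\ right_nilpotent mul 0 <-> forall a b : S, a = b.
  by split=> [[triv _] a b | triv]; [exact: triv | split=> a b _; exact: triv].
by rewrite supernilpotent0 embeds0 lr0.
Qed.

Let tc1 := term_cond mul (fun _ : 'I_2 => total) (@eq S).

Lemma embeds1_term_cond : embeds_into_nilpotent_group mul 1 -> tc1.
Proof.
case=> G [gmul [ginv [ge [group_G nil [h [h_inj hM]]]]]].
apply: (term_cond_eq_of_central group_G h_inj hM (i := ord_max)) => c d _ y.
exact: nil1_commute nil _ _.
Qed.

Lemma equivalences1 :
  (supernilpotent mul 1 <-> (left_nilpotent mul 1 /\ right_nilpotent mul 1)) /\
  ((left_nilpotent mul 1 /\ right_nilpotent mul 1) <-> embeds_into_nilpotent_group mul 1).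
Proof.
have sn1 : supernilpotent mul 1 <-> tc1 by exact: commutator_trivialP.
have ln1 : left_nilpotent mul 1 <-> tc1.
  by rewrite /left_nilpotent /= comm2_total; exact: commutator_trivialP.
have rn1 : right_nilpotent mul 1 <-> tc1.
  by rewrite /right_nilpotent /= comm2_total; exact: commutator_trivialP.
have em1 : embeds_into_nilpotent_group mul 1 <-> tc1.
  split=> [|tc]; first exact: embeds1_term_cond.
  have mulC := tc1_mulC mul1s muls1 tc.
  apply: (commutative_embeds_nil1 mulA mul1s muls1) => // a c d.
  by rewrite ![mul _ a]mulC; apply: (tc1_mulI mul1s tc).
by rewrite sn1 ln1 rn1 em1; tauto.
Qed.

Let tc3 := term_cond mul (fun _ : 'I_3 => total) (@eq S).
Let tcL := term_cond mul (fun i : 'I_2 => if val i == 0 then total else comm11 mul) (@eq S).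
Let tcR := term_cond mul (fun i : 'I_2 => if val i == 0 then comm11 mul else total) (@eq S).

Lemma embeds2_term_cond : embeds_into_nilpotent_group mul 2 -> [/\ tc3, tcL & tcR].
Proof.
case=> G [gmul [ginv [ge [group_G nil [h [h_inj hM]]]]]].
have class2 := nil2_central_gcomm group_G nil.
have comm11Z := comm11_eqmodZ group_G hM class2.
split.
- exact: (@eq_term_cond_class2 _ _ _ _ group_G _ _ _ h_inj hM class2 0).
- exact: (term_cond_eq_of_central group_G h_inj hM (i := ord_max) comm11Z).
- exact: (term_cond_eq_of_central group_G h_inj hM (i := ord0) comm11Z).
Qed.

Lemma equivalences2 :
  (supernilpotent mul 2 <-> (left_nilpotent mul 2 /\ right_nilpotent mul 2)) /\
  ((left_nilpotent mul 2 /\ right_nilpotent mul 2) <-> embeds_into_nilpotent_group mul 2).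
Proof.
have sn2 : supernilpotent mul 2 <-> tc3 by exact: commutator_trivialP.
have ln2 : left_nilpotent mul 2 <-> tcL.
  by rewrite /left_nilpotent /= comm2_total; exact: commutator_trivialP.
have rn2 : right_nilpotent mul 2 <-> tcR.
  by rewrite /right_nilpotent /= comm2_total; exact: commutator_trivialP.
have tc3_embeds : tc3 -> embeds_into_nilpotent_group mul 2.
  move=> tc; apply: (twisted_malcev_embeds_nil2 mulA mul1s muls1).
  - exact: (tc3_mulI mulA mul1s muls1 tc).
  - exact: (tc3_mulIr muls1 tc).
  - exact: tc3_twisted_malcev mulA mul1s muls1 tc.
have tcLR_embeds : tcL -> tcR -> embeds_into_nilpotent_group mul 2.
  move=> tcl tcr; apply: (twisted_malcev_embeds_nil2 mulA mul1s muls1).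
  - exact: (tcL_mulI mul1s tcl).
  - exact: (tcL_mulIr muls1 tcl).
  - exact: tcLR_twisted_malcev mulA mul1s muls1 tcl tcr.
rewrite sn2 ln2 rn2; split; split.
- by move/tc3_embeds/embeds2_term_cond => [].
- by case=> tcl tcr; case: (embeds2_term_cond (tcLR_embeds tcl tcr)).
- by case; exact: tcLR_embeds.
- by case/embeds2_term_cond.
Qed.

End Equivalences.

Theorem theorem4p6 (S : Type) (mul : S -> S -> S) (e : S)
    (mulA : associative mul) (mul1s : left_id e mul) (muls1 : right_id e mul)
    (n : nat) (hn : n <= 2) :
  (supernilpotent mul n <-> (left_nilpotent mul n /\ right_nilpotent mul n)) /\
  ((left_nilpotent mul n /\ right_nilpotent mul n) <->
     embeds_into_nilpotent_group mul n).
Proof.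
case: n hn => [|[|[|//]]] _.
- exact: equivalences0.
- exact: equivalences1 mulA mul1s muls1.
- exact: equivalences2 mulA mul1s muls1.
Qed.
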